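(* Let $\mathbb{X}$ be a two-dimensional real Banach space. Suppose that every $T\in\mathbb{L}(\mathbb{X})$ with $\|T\|=1$ which attains its norm at (at least) two linearly independent vectors is an extreme contraction. Then $\mathbb{X}$ is strictly convex.
   Context: $T$ attains its norm at $u$ if $\|u\|=1$ and $\|Tu\|=\|T\|$. An extreme contraction is a norm one operator that is an extreme point of the closed unit ball of $\mathbb{L}(\mathbb{X})$. *)

From HB Require Import structures.
From mathcomp Require Import all_boot all_order all_algebra.
From mathcomp Require Import boolp classical_sets reals.
Set Implicit Arguments. Unset Strict Implicit. Unset Printing Implicit Defensive.
Import Order.TTheory GRing.Theory Num.Theory.
Local Open Scope ring_scope.
Local Open Scope classical_set_scope.

(* A two-dimensional real normed space is modelled as 'rV[R]_2 with an
   arbitrary norm N (every 2-dim real normed space is isometric to such a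
   space; completeness is automatic in finite dimension). *)
Definition is_norm (R : realType) (N : 'rV[R]_2 -> R) : Prop :=
  [/\ forall x, N x = 0 -> x = 0,
      forall (a : R) x, N (a *: x) = `|a| * N x
    & forall x y, N (x + y) <= N x + N y].

(* Linear operators on X are 2x2 matrices acting on row vectors: x |-> x *m T. *)
Definition opnorm (R : realType) (N : 'rV[R]_2 -> R) (T : 'M[R]_2) : R :=
  sup [set N (x *m T) | x in [set x | N x <= 1]].

Definition attains_norm (R : realType) (N : 'rV[R]_2 -> R) (T : 'M[R]_2)
  (u : 'rV[R]_2) : Prop :=
  N u = 1 /\ N (u *m T) = opnorm N T.

Definition lin_indep2 (R : realType) (u v : 'rV[R]_2) : Prop :=
  forall a b : R, a *: u + b *: v = 0 -> a = 0 /\ b = 0.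

Definition extreme_point_unit_ball (R : realType) (N : 'rV[R]_2 -> R)
  (T : 'M[R]_2) : Prop :=
  opnorm N T <= 1 /\
  forall (A B : 'M[R]_2) (t : R), opnorm N A <= 1 -> opnorm N B <= 1 ->
    0 < t < 1 -> T = t *: A + (1 - t) *: B -> A = T /\ B = T.

Definition extreme_contraction (R : realType) (N : 'rV[R]_2 -> R)
  (T : 'M[R]_2) : Prop :=
  opnorm N T = 1 /\ extreme_point_unit_ball N T.

Definition strictly_convex (R : realType) (N : 'rV[R]_2 -> R) : Prop :=
  forall (x y : 'rV[R]_2) (t : R), N x = 1 -> N y = 1 -> x <> y ->
    0 < t < 1 -> N (t *: x + (1 - t) *: y) < 1.

From HB Require Import structures.
From mathcomp Require Import all_boot all_order all_algebra.
From mathcomp Require Import boolp classical_sets reals.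
From mathcomp Require Import ring lra.
Set Implicit Arguments. Unset Strict Implicit. Unset Printing Implicit Defensive.
Import Order.TTheory GRing.Theory Num.Theory.
Local Open Scope ring_scope.
Local Open Scope classical_set_scope.

(* If strict convexity fails, some point strictly between two distinct unit
   vectors x and y has norm 1. Then the whole line through x and y avoids the
   open unit ball, so x and y are independent and the linear functional c with
   c x = c y = 1 has norm 1. The rank-one operators w |-> (c w) z, for z on the
   sphere, have norm 1; for the midpoint m of [x, y] the operator attains its
   norm at x and at y, so it is an extreme contraction by hypothesis. But it is
   the average of the operators built from x and from y, which differ. *)

Section PlaneLinearAlgebra.
Variable R : realType.
Implicit Types (a l : R) (u v w x y z : 'rV[R]_2) (c : 'cV[R]_2).

Definition line x y l : 'rV[R]_2 := l *: x + (1 - l) *: y.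

Definition pairing w c : R := (w *m c) 0 0.

Lemma row2P u v : u 0 0 = v 0 0 -> u 0 1 = v 0 1 -> u = v.
Proof.
move=> e0 e1; apply/rowP => -[[|[|//]] j2].
- by rewrite (_ : Ordinal j2 = 0) //; apply/val_inj.
- by rewrite (_ : Ordinal j2 = 1) //; apply/val_inj.
Qed.

Lemma mul_row2_col_mx u x y : u *m col_mx x y = u 0 0 *: x + u 0 1 *: y.
Proof.
apply/rowP => j; rewrite !mxE !big_ord_recl big_ord0 addr0 !mxE.
case: splitP => [i _|i /= /eqP//]; case: splitP => [[[|//] ?] //|i' _].
by rewrite !ord1; congr (u 0 _ * _ + u 0 _ * _); apply/val_inj.
Qed.

Lemma lin_indep2_unitmx x y : lin_indep2 x y -> col_mx x y \in unitmx.
Proof.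
move=> indep; rewrite -row_free_unit; apply: inj_row_free => u.
rewrite mul_row2_col_mx => /indep[u0 u1].
by apply: row2P; rewrite mxE.
Qed.

Lemma pairingD u v c : pairing (u + v) c = pairing u c + pairing v c.
Proof. by rewrite /pairing mulmxDl mxE. Qed.

Lemma pairingZ a w c : pairing (a *: w) c = a * pairing w c.
Proof. by rewrite /pairing -scalemxAl mxE. Qed.

Lemma mul_rank1 w c z : w *m (c *m z) = pairing w c *: z.
Proof. by rewrite mulmxA [w *m c]mx11_scalar mul_scalar_mx. Qed.

Section Basis.
Variables x y : 'rV[R]_2.
Hypothesis xy_unit : col_mx x y \in unitmx.

Lemma exists_pairing_eq1 : exists c, pairing x c = 1 /\ pairing y c = 1.
Proof.
pose c : 'cV[R]_2 := invmx (col_mx x y) *m const_mx 1.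
have : col_mx x y *m c = col_mx (const_mx 1) (const_mx 1).
  rewrite mulmxA mulmxV // mul1mx; apply/matrixP => i j.
  by rewrite !mxE; case: splitP => ? _; rewrite mxE.
rewrite mul_col_mx => /eq_col_mx[cx cy].
by exists c; rewrite /pairing cx cy !mxE.
Qed.

Lemma pairing_eq1_line c w : pairing x c = 1 -> pairing y c = 1 ->
  pairing w c = 1 -> exists l, w = line x y l.
Proof.
move=> cx cy; set u := w *m invmx (col_mx x y).
have -> : w = u 0 0 *: x + u 0 1 *: y by rewrite -mul_row2_col_mx mulmxKV.
rewrite pairingD !pairingZ cx cy !mulr1 => u1.
by exists (u 0 0); rewrite /line (_ : 1 - u 0 0 = u 0 1) //; lra.
Qed.

End Basis.

End PlaneLinearAlgebra.

Section NormedPlane.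
Variables (R : realType) (N : 'rV[R]_2 -> R).
Hypothesis normN : is_norm N.
Implicit Types (a b l t : R) (u v w x y z : 'rV[R]_2) (c : 'cV[R]_2).

Lemma normZ a v : N (a *: v) = `|a| * N v.
Proof. by case: normN. Qed.

Lemma norm0 : N 0 = 0.
Proof. by rewrite -(scale0r 0) normZ normr0 mul0r. Qed.

Lemma norm_ge0 v : 0 <= N v.
Proof.
case: normN => _ _ /(_ v (- v)); rewrite subrr norm0 -scaleN1r normZ.
by rewrite normrN normr1 mul1r; lra.
Qed.

Lemma norm_conic_le a b u v : 0 <= a -> 0 <= b ->
  N (a *: u + b *: v) <= a * N u + b * N v.
Proof.
move=> a0 b0; case: normN => _ _ /(_ (a *: u) (b *: v)).
by rewrite !normZ !ger0_norm.
Qed.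

Lemma norm_comb_ge1 t u v : 0 < t <= 1 -> N v <= 1 ->
  1 <= N (t *: u + (1 - t) *: v) -> 1 <= N u.
Proof.
move=> /andP[t0 t1] Nv; have t1' : 0 <= 1 - t by lra.
have := norm_conic_le u v (ltW t0) t1'; have := norm_ge0 u; have := norm_ge0 v.
nra.
Qed.

Lemma line_norm_ge1 x y t : N x = 1 -> N y = 1 -> 0 < t < 1 ->
  1 <= N (line x y t) -> forall l, 1 <= N (line x y l).
Proof.
move=> Nx Ny /andP[t0 t1] Nt l; have [lt|tl] := lerP l t.
- pose s := (1 - t) / (1 - l).
  have line_t : line x y t = s *: line x y l + (1 - s) *: x.
    by apply/rowP => j; rewrite !mxE /s; field; lra.
  apply: (@norm_comb_ge1 s _ x); rewrite -?line_t ?Nx //.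
  by rewrite /s divr_gt0 ?ler_pdivrMr /=; lra.
- pose s := t / l.
  have line_t : line x y t = s *: line x y l + (1 - s) *: y.
    by apply/rowP => j; rewrite !mxE /s; field; lra.
  apply: (@norm_comb_ge1 s _ y); rewrite -?line_t ?Ny //.
  by rewrite /s divr_gt0 ?ler_pdivrMr /=; lra.
Qed.

Lemma line_norm_ge1_lin_indep x y : x <> y ->
  (forall l, 1 <= N (line x y l)) -> lin_indep2 x y.
Proof.
move=> xy Nline a b e; have [ab0|ab0] := eqVneq (a + b) 0.
- move: e; rewrite (_ : b = - a); last by lra.
  rewrite scaleNr -scalerBr => /eqP; rewrite scaler_eq0 subr_eq0.
  by case/orP => [/eqP ->|/eqP/xy //]; rewrite oppr0.
- have := Nline (a / (a + b)).
  have -> : line x y (a / (a + b)) = (a + b)^-1 *: (a *: x + b *: y).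
    by apply/rowP => j; rewrite !mxE; field.
  by rewrite e scaler0 norm0 ler10.
Qed.

Lemma abs_pairing_le_norm c : (forall w, pairing w c = 1 -> 1 <= N w) ->
  forall w, `|pairing w c| <= N w.
Proof.
move=> level w; have [->|p0] := eqVneq (pairing w c) 0; first by rewrite normr0 norm_ge0.
have w_eq : w = pairing w c *: ((pairing w c)^-1 *: w) by rewrite scalerA mulfV ?scale1r.
rewrite [in N w]w_eq normZ ler_pMr ?normr_gt0 //; apply: level.
by rewrite pairingZ mulVf.
Qed.

Lemma opnorm_rank1 c x z : (forall w, `|pairing w c| <= N w) ->
  N x = 1 -> pairing x c = 1 -> opnorm N (c *m z) = N z.
Proof.
move=> c_le Nx cx; rewrite /opnorm; set S := (X in sup X).
have S_ub : ubound S (N z).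
  move=> _ [w /= Nw <-]; rewrite mul_rank1 normZ -[leRHS]mul1r.
  by rewrite ler_wpM2r ?norm_ge0 // (le_trans (c_le w)).
have Sz : S (N z) by exists x; rewrite /= ?Nx // mul_rank1 cx scale1r.
apply/le_anti; rewrite ge_sup //=; last by exists (N z).
by apply: sup_upper_bound => //; split; [exists (N z) | exists (N z)].
Qed.

End NormedPlane.

Theorem mainTheorem18 (R : realType) (N : 'rV[R]_2 -> R) (hN : is_norm N) :
  (forall T : 'M[R]_2, opnorm N T = 1 ->
     (exists u v : 'rV[R]_2, lin_indep2 u v /\ attains_norm N T u /\ attains_norm N T v) ->
     extreme_contraction N T) ->
  strictly_convex N.
Proof.
move=> extreme x y t Nx Ny xy t01; rewrite ltNge; apply/negP => Nt.
have Nline := line_norm_ge1 hN Nx Ny t01 Nt.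
have xy_indep := line_norm_ge1_lin_indep hN xy Nline.
have xy_unit := lin_indep2_unitmx xy_indep.
have [c [cx cy]] := exists_pairing_eq1 xy_unit.
have c_le : forall w, `|pairing w c| <= N w.
  apply: abs_pairing_le_norm => // w.
  by case/(pairing_eq1_line xy_unit cx cy) => l ->.
have opnormA z := opnorm_rank1 hN z c_le Nx cx.
pose m := line x y (1 / 2).
have Nm : N m = 1.
  apply/le_anti; rewrite Nline andbT.
  have half_ge0 : 0 <= 1 / 2 :> R by lra.
  have half_ge0' : 0 <= 1 - 1 / 2 :> R by lra.
  have := norm_conic_le hN x y half_ge0 half_ge0'.
  by rewrite Nx Ny /m /line; lra.
have [_ [_ Am_extreme]] : extreme_contraction N (c *m m).
  apply: extreme; first by rewrite opnormA.
  by exists x, y; rewrite /attains_norm !mul_rank1 cx cy scale1r opnormA Nm.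
have [Ax_eq Ay_eq] : c *m x = c *m m /\ c *m y = c *m m.
  apply: (Am_extreme _ _ (1 / 2)); rewrite ?opnormA ?Nx ?Ny //.
    by apply/andP; split; lra.
  by rewrite /m /line mulmxDr -!scalemxAr.
apply: xy.
by rewrite -[x]scale1r -{1}cx -mul_rank1 Ax_eq -Ay_eq mul_rank1 cx scale1r.
Qed.
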